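(* For a unitary boundary triple $\{\mathcal H,\Gamma_0,\Gamma_1\}$ for $A^*$ with $A_*=\operatorname{dom}\Gamma$, the following are equivalent: (i) $\Gamma_0:A_*\to\mathcal H$ is bounded (with respect to the norm of $\mathfrak H^2$) and $\operatorname{ran}\Gamma_0=\mathcal H$; (ii) $\Gamma_1:A_*\to\mathcal H$ is bounded and $\operatorname{ran}\Gamma_1=\mathcal H$; (iii) $\{\mathcal H,\Gamma_0,\Gamma_1\}$ is an ordinary boundary triple for $A^*$. *)

From Stdlib Require Import Reals.
From Coquelicot Require Import Coquelicot.
Open Scope R_scope.

Record CHilbert := {
  hs :> Type;
  h0 : hs;
  hadd : hs -> hs -> hs;
  hopp : hs -> hs;
  hscal : C -> hs -> hs;
  hip : hs -> hs -> C;   (* inner product, linear in the first argument *)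
  hadd_assoc : forall x y z, hadd x (hadd y z) = hadd (hadd x y) z;
  hadd_comm : forall x y, hadd x y = hadd y x;
  hadd_0 : forall x, hadd x h0 = x;
  hadd_opp : forall x, hadd x (hopp x) = h0;
  hscal_assoc : forall a b x, hscal a (hscal b x) = hscal (Cmult a b) x;
  hscal_1 : forall x, hscal (RtoC 1) x = x;
  hscal_distr_l : forall a x y, hscal a (hadd x y) = hadd (hscal a x) (hscal a y);
  hscal_distr_r : forall a b x, hscal (Cplus a b) x = hadd (hscal a x) (hscal b x);
  hip_add_l : forall x y z, hip (hadd x y) z = Cplus (hip x z) (hip y z);
  hip_scal_l : forall a x y, hip (hscal a x) y = Cmult a (hip x y);
  hip_conj : forall x y, hip x y = Cconj (hip y x);
  hip_pos : forall x, 0 <= Re (hip x x);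
  hip_definite : forall x, hip x x = RtoC 0 -> x = h0;
  hcomplete : forall u : nat -> hs,
    (forall eps, 0 < eps -> exists N, forall m n, (N <= m)%nat -> (N <= n)%nat ->
       sqrt (Re (hip (hadd (u n) (hopp (u m))) (hadd (u n) (hopp (u m))))) < eps) ->
    exists l, forall eps, 0 < eps -> exists N, forall n, (N <= n)%nat ->
       sqrt (Re (hip (hadd (u n) (hopp l)) (hadd (u n) (hopp l)))) < eps
}.

Arguments h0 {_}. Arguments hadd {_}. Arguments hopp {_}.
Arguments hscal {_}. Arguments hip {_}.

Definition hnorm {H : CHilbert} (x : H) : R := sqrt (Re (hip x x)).
Definition hsub {H : CHilbert} (x y : H) : H := hadd x (hopp y).

Definition lrel (H : CHilbert) := (H * H)%type -> Prop.

Definition pnorm {H : CHilbert} (f : H * H) : R :=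
  sqrt (hnorm (fst f) ^ 2 + hnorm (snd f) ^ 2).
Definition psub {H : CHilbert} (f g : H * H) : H * H :=
  (hsub (fst f) (fst g), hsub (snd f) (snd g)).
Definition padd {H : CHilbert} (f g : H * H) : H * H :=
  (hadd (fst f) (fst g), hadd (snd f) (snd g)).
Definition pscal {H : CHilbert} (a : C) (f : H * H) : H * H :=
  (hscal a (fst f), hscal a (snd f)).

Definition is_subspace {H : CHilbert} (T : lrel H) : Prop :=
  T (h0, h0) /\
  (forall f g, T f -> T g -> T (padd f g)) /\
  (forall a f, T f -> T (pscal a f)).

Definition pclosure {H : CHilbert} (T : lrel H) : lrel H :=
  fun f => forall eps, 0 < eps -> exists g, T g /\ pnorm (psub f g) < eps.

Definition is_closed {H : CHilbert} (T : lrel H) : Prop :=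
  forall f, pclosure T f -> T f.

Definition adjoint {H : CHilbert} (T : lrel H) : lrel H :=
  fun f => forall g, T g -> hip (snd f) (fst g) = hip (fst f) (snd g).

Definition closed_symmetric {H : CHilbert} (A : lrel H) : Prop :=
  is_subspace A /\ is_closed A /\ (forall f, A f -> adjoint A f).

(** * Krein-space structure on h^2 : up to the constant factor -i, the
    fundamental form is  [f^, g^] = (f', g) - (f, g')  (same convention used
    on both sides, so the factor is irrelevant for (J-)unitarity). *)
Definition kform {H : CHilbert} (f g : H * H) : C :=
  Cplus (hip (snd f) (fst g)) (Copp (hip (fst f) (snd g))).

(** Gamma = (Gamma0, Gamma1) with domain Astar (= A_* = dom Gamma), viewed
    as a single-valued linear relation from h^2 to H^2. *)
Definition Gamma_graph {h K : CHilbert} (Astar : lrel h) (G0 G1 : h * h -> K)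
  (f : h * h) (k : K * K) : Prop := Astar f /\ k = (G0 f, G1 f).

Definition Gamma_Kadj {h K : CHilbert} (Astar : lrel h) (G0 G1 : h * h -> K)
  (k : K * K) (f : h * h) : Prop :=
  forall g, Astar g -> kform (G0 g, G1 g) k = kform g f.

Definition Gamma_unitary {h K : CHilbert} (Astar : lrel h) (G0 G1 : h * h -> K)
  : Prop :=
  forall k f, Gamma_Kadj Astar G0 G1 k f <-> Gamma_graph Astar G0 G1 f k.

Definition unitary_boundary_triple {h : CHilbert} (A : lrel h) (K : CHilbert)
  (Astar : lrel h) (G0 G1 : h * h -> K) : Prop :=
  is_subspace Astar /\
  (forall a f g, Astar f -> Astar g ->
     G0 (padd (pscal a f) g) = hadd (hscal a (G0 f)) (G0 g) /\
     G1 (padd (pscal a f) g) = hadd (hscal a (G1 f)) (G1 g)) /\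
  Gamma_unitary Astar G0 G1 /\
  (forall f, pclosure Astar f <-> adjoint A f).

Definition ordinary_boundary_triple {h : CHilbert} (A : lrel h) (K : CHilbert)
  (Astar : lrel h) (G0 G1 : h * h -> K) : Prop :=
  (forall f, Astar f <-> adjoint A f) /\
  (forall a f g, adjoint A f -> adjoint A g ->
     G0 (padd (pscal a f) g) = hadd (hscal a (G0 f)) (G0 g) /\
     G1 (padd (pscal a f) g) = hadd (hscal a (G1 f)) (G1 g)) /\
  (forall f g, adjoint A f -> adjoint A g ->
     Cplus (hip (snd f) (fst g)) (Copp (hip (fst f) (snd g))) =
     Cplus (hip (G1 f) (G0 g)) (Copp (hip (G0 f) (G1 g)))) /\
  (forall k0 k1 : K, exists f, adjoint A f /\ G0 f = k0 /\ G1 f = k1).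

Definition bounded_on {h K : CHilbert} (Astar : lrel h) (G : h * h -> K) : Prop :=
  exists c, forall f, Astar f -> hnorm (G f) <= c * pnorm f.

Definition range_full {h K : CHilbert} (Astar : lrel h) (G : h * h -> K) : Prop :=
  forall k : K, exists f, Astar f /\ G f = k.

(* Green's identity writes (Gamma1 f, Gamma0 g) - (Gamma0 f, Gamma1 g) as the
   form [f, g] of h^2, which is bounded in f and g.  Hence if Gamma0 is bounded
   and onto, every functional f |-> (Gamma1 f, k) = (Gamma1 f, Gamma0 g) is
   bounded, and the uniform boundedness principle (proved by a gliding-hump
   argument) makes Gamma1 bounded; the roles of Gamma0 and Gamma1 can be swapped.
   Once Gamma = (Gamma0, Gamma1) is bounded, unitarity (Gamma^[*] = Gamma^-1)
   makes dom Gamma closed, hence equal to A^*, and for each k the Riesz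
   representative of g |-> [Gamma g, k] on the closed subspace dom Gamma gives,
   again by unitarity, an f with Gamma f = k.  Conversely, for an ordinary
   triple, Green's identity with Gamma g = (0, k) or (k, 0) shows that Gamma0
   and Gamma1 are weakly, hence strongly, bounded. *)

From Stdlib Require Import Reals Lra Lia Psatz ZArith IndefiniteDescription Classical.
From Coquelicot Require Import Coquelicot.
Open Scope R_scope.

Arguments hadd_assoc {_}. Arguments hadd_comm {_}. Arguments hadd_0 {_}.
Arguments hadd_opp {_}. Arguments hscal_assoc {_}. Arguments hscal_1 {_}.
Arguments hscal_distr_l {_}. Arguments hscal_distr_r {_}. Arguments hip_add_l {_}.
Arguments hip_scal_l {_}. Arguments hip_conj {_}. Arguments hip_pos {_}.
Arguments hip_definite {_}. Arguments hcomplete {_}.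

Lemma Cconj_R (r : R) : Cconj (RtoC r) = RtoC r.
Proof. unfold Cconj, RtoC; simpl; f_equal; lra. Qed.

Section InnerProduct.
Context {H : CHilbert}.

Lemma hadd_0l (x : H) : hadd h0 x = x.
Proof. rewrite hadd_comm; apply hadd_0. Qed.

Lemma hadd_oppl (x : H) : hadd (hopp x) x = h0.
Proof. rewrite hadd_comm; apply hadd_opp. Qed.

Lemma hadd_idem_eq0 (x : H) : hadd x x = x -> x = h0.
Proof.
  intro E. rewrite <- (hadd_opp x). rewrite <- E at 2.
  rewrite <- hadd_assoc, hadd_opp, hadd_0. reflexivity.
Qed.

Lemma hscal_0 (x : H) : hscal (RtoC 0) x = h0.
Proof.
  apply hadd_idem_eq0. rewrite <- hscal_distr_r. f_equal.
  unfold Cplus, RtoC; simpl; f_equal; lra.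
Qed.

Lemma hopp_scal (x : H) : hopp x = hscal (Copp (RtoC 1)) x.
Proof.
  assert (E : hadd x (hscal (Copp (RtoC 1)) x) = h0).
  { rewrite <- (hscal_1 x) at 1. rewrite <- hscal_distr_r.
    replace (Cplus (RtoC 1) (Copp (RtoC 1))) with (RtoC 0)
      by (unfold Cplus, Copp, RtoC; simpl; f_equal; lra).
    apply hscal_0. }
  rewrite <- (hadd_0 (hopp x)), <- E, hadd_assoc, hadd_oppl, hadd_0l. reflexivity.
Qed.

Lemma hip_0l (y : H) : hip h0 y = RtoC 0.
Proof. rewrite <- (hscal_0 h0), hip_scal_l. ring. Qed.

Lemma hip_add_r (x y z : H) : hip x (hadd y z) = Cplus (hip x y) (hip x z).
Proof. rewrite hip_conj, hip_add_l, Cplus_conj, <- !hip_conj. reflexivity. Qed.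

Lemma hip_scal_r (a : C) (x y : H) : hip x (hscal a y) = Cmult (Cconj a) (hip x y).
Proof. rewrite hip_conj, hip_scal_l, Cmult_conj, <- hip_conj. reflexivity. Qed.

Lemma hip_0r (y : H) : hip y h0 = RtoC 0.
Proof. rewrite hip_conj, hip_0l. apply Cconj_R. Qed.

Lemma hip_opp_l (x y : H) : hip (hopp x) y = Copp (hip x y).
Proof. rewrite hopp_scal, hip_scal_l. ring. Qed.

Lemma hip_opp_r (x y : H) : hip x (hopp y) = Copp (hip x y).
Proof. rewrite hopp_scal, hip_scal_r, Copp_conj, Cconj_R. ring. Qed.

Lemma hsub_self_eq (x y : H) : hip (hsub x y) (hsub x y) = RtoC 0 -> x = y.
Proof.
  intro E. apply hip_definite in E. unfold hsub in E.
  rewrite <- (hadd_0 x), <- (hadd_oppl y), hadd_assoc, E, hadd_0l. reflexivity.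
Qed.

End InnerProduct.

Ltac hip_expand := unfold hsub in *;
  repeat rewrite ?hip_add_l, ?hip_add_r, ?hip_scal_l, ?hip_scal_r, ?hip_opp_l,
    ?hip_opp_r, ?hip_0l, ?hip_0r, ?Cconj_R, ?Copp_conj, ?Cconj_conj.

Ltac hvec_eq := apply hsub_self_eq; hip_expand; ring.

Lemma le_of_sq (a b : R) : 0 <= b -> a * a <= b * b -> a <= b.
Proof. intros. nra. Qed.

Lemma le_eps (a b : R) : (forall eps, 0 < eps -> a <= b + eps) -> a <= b.
Proof. intro K. apply Rnot_lt_le. intro L. specialize (K ((a - b) / 2) ltac:(lra)). lra. Qed.

Lemma sqrt_plus_le (a b : R) : 0 <= a -> 0 <= b -> sqrt (a + b) <= sqrt a + sqrt b.
Proof.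
  intros Ha Hb. apply le_of_sq.
  - pose proof (sqrt_pos a); pose proof (sqrt_pos b); lra.
  - rewrite sqrt_sqrt by lra.
    pose proof (sqrt_sqrt a Ha); pose proof (sqrt_sqrt b Hb).
    pose proof (sqrt_pos a); pose proof (sqrt_pos b). nra.
Qed.

Lemma inv_INR_small (e : R) : 0 < e -> exists N : nat, forall n, (N <= n)%nat -> / (INR n + 1) < e.
Proof.
  intros He. destruct (archimed (/ e)) as [A _].
  exists (Z.to_nat (up (/ e))). intros n Hn.
  assert (INR n >= / e).
  { apply le_INR in Hn. rewrite INR_IZR_INZ, Z2Nat.id in Hn. lra.
    apply le_IZR. pose proof (Rinv_0_lt_compat e He). lra. }
  pose proof (pos_INR n). pose proof (Rinv_0_lt_compat e He).
  apply (Rmult_lt_reg_l (INR n + 1)). lra. rewrite Rinv_r by lra.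
  apply (Rmult_lt_reg_l (/e)). auto.
  replace (/ e * ((INR n + 1) * e)) with (INR n + 1) by (field; lra). lra.
Qed.

Lemma inv_INR_pos (n : nat) : 0 < / (INR n + 1).
Proof. apply Rinv_0_lt_compat. pose proof (pos_INR n). lra. Qed.

Lemma Ceq_of_small (a b : C) : (forall eps, 0 < eps -> Cmod (Cminus a b) <= eps) -> a = b.
Proof.
  intro K. assert (E : Cmod (Cminus a b) = 0).
  { pose proof (Cmod_ge_0 (Cminus a b)).
    destruct (Req_dec (Cmod (Cminus a b)) 0); auto.
    specialize (K (Cmod (Cminus a b) / 2)). lra. }
  apply Cmod_eq_0 in E. replace a with (Cplus (Cminus a b) b) by ring.
  rewrite E. ring.
Qed.

Lemma Cmod_minus_le (a b : C) : Cmod (Cminus a b) <= Cmod a + Cmod b.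
Proof. unfold Cminus. eapply Rle_trans. apply Cmod_triangle. rewrite Cmod_opp. lra. Qed.

Section Norms.
Context {H : CHilbert}.

Definition nsq (x : H) : R := Re (hip x x).

Lemma hip_self (x : H) : hip x x = RtoC (nsq x).
Proof.
  unfold nsq. pose proof (hip_conj x x) as E.
  destruct (hip x x) as [a b]. unfold Cconj in E; simpl in E.
  injection E; intros Hb. unfold RtoC; simpl. f_equal. lra.
Qed.

Lemma nsq_ge0 (x : H) : 0 <= nsq x.
Proof. apply hip_pos. Qed.

Lemma nsq_eq0 (x : H) : nsq x = 0 -> x = h0.
Proof. intro E. apply hip_definite. rewrite hip_self, E. reflexivity. Qed.

Lemma hnorm_sq (x : H) : hnorm x * hnorm x = nsq x.
Proof. unfold hnorm. apply sqrt_sqrt, nsq_ge0. Qed.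

Lemma hnorm_ge0 (x : H) : 0 <= hnorm x.
Proof. apply sqrt_pos. Qed.

Lemma hnorm_h0 : hnorm (h0 : H) = 0.
Proof. unfold hnorm. rewrite hip_0l. apply sqrt_0. Qed.

Lemma hnorm_eq0 (x : H) : hnorm x = 0 -> x = h0.
Proof. intro E. apply nsq_eq0. rewrite <- hnorm_sq, E. ring. Qed.

Lemma hnorm_le (x : H) (r : R) : 0 <= r -> nsq x <= r * r -> hnorm x <= r.
Proof. intros. apply le_of_sq; auto. rewrite hnorm_sq. auto. Qed.

Lemma Cauchy_Schwarz (x y : H) : Cmod (hip x y) <= hnorm x * hnorm y.
Proof.
  destruct (Req_dec (nsq y) 0) as [E|E].
  { apply nsq_eq0 in E. subst. rewrite hip_0r, hnorm_h0, Cmod_0. lra. }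
  assert (Hn : 0 < nsq y) by (pose proof (nsq_ge0 y); lra).
  assert (Hy : RtoC (nsq y) <> RtoC 0) by (intro K; injection K; lra).
  set (c := hip x y).
  (* expand [0 <= |x - (c / |y|^2) y|^2] *)
  set (t := Cdiv c (RtoC (nsq y))).
  assert (Hv : hip (hsub x (hscal t y)) (hsub x (hscal t y)) =
               RtoC (nsq x - Cmod c ^ 2 / nsq y)).
  { hip_expand. rewrite (hip_conj y x). fold c. rewrite !hip_self.
    unfold t. rewrite Cdiv_conj, Cconj_R by exact Hy.
    rewrite RtoC_minus, RtoC_div, Cmod2_conj by lra. field. exact Hy. }
  pose proof (nsq_ge0 (hsub x (hscal t y))) as P. unfold nsq at 1 in P.
  rewrite Hv in P. simpl in P.
  apply le_of_sq. { apply Rmult_le_pos; apply hnorm_ge0. }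
  replace (hnorm x * hnorm y * (hnorm x * hnorm y)) with (nsq x * nsq y)
    by (rewrite <- !hnorm_sq; ring).
  assert (Cmod c ^ 2 / nsq y * nsq y <= nsq x * nsq y) by nra.
  replace (Cmod c ^ 2 / nsq y * nsq y) with (Cmod c ^ 2) in * by (field; lra).
  nra.
Qed.

Lemma hnorm_triangle (x y : H) : hnorm (hadd x y) <= hnorm x + hnorm y.
Proof.
  pose proof (hnorm_ge0 x); pose proof (hnorm_ge0 y).
  apply hnorm_le; [lra|].
  assert (E : nsq (hadd x y) = nsq x + nsq y + 2 * Re (hip x y)).
  { unfold nsq. hip_expand. rewrite (hip_conj y x).
    destruct (hip x x), (hip y y), (hip x y). simpl. lra. }
  rewrite E. pose proof (re_le_Cmod (hip x y)). pose proof (Rle_abs (Re (hip x y))).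
  pose proof (Cauchy_Schwarz x y). rewrite <- !hnorm_sq. nra.
Qed.

Lemma hnorm_scal (a : C) (x : H) : hnorm (hscal a x) = Cmod a * hnorm x.
Proof.
  assert (E : nsq (hscal a x) = Cmod a ^ 2 * nsq x).
  { unfold nsq at 1. rewrite hip_scal_l, hip_scal_r, hip_self, Cmult_assoc,
      <- Cmod2_conj, <- RtoC_mult. reflexivity. }
  unfold hnorm. fold (nsq (hscal a x)) (nsq x). rewrite E.
  rewrite sqrt_mult_alt, sqrt_pow2. reflexivity.
  - apply Cmod_ge_0.
  - pose proof (Cmod_ge_0 a); nra.
Qed.

Lemma hnorm_opp (x : H) : hnorm (hopp x) = hnorm x.
Proof. rewrite hopp_scal, hnorm_scal, Cmod_opp, Cmod_1. ring. Qed.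

Lemma hnorm_sub_sym (x y : H) : hnorm (hsub x y) = hnorm (hsub y x).
Proof. replace (hsub x y) with (hopp (hsub y x)) by hvec_eq. apply hnorm_opp. Qed.

Lemma hnorm_sub_triangle (x y z : H) :
  hnorm (hsub x z) <= hnorm (hsub x y) + hnorm (hsub y z).
Proof.
  replace (hsub x z) with (hadd (hsub x y) (hsub y z)) by hvec_eq.
  apply hnorm_triangle.
Qed.

Definition hcauchy (u : nat -> H) : Prop :=
  forall eps, 0 < eps -> exists N, forall m n, (N <= m)%nat -> (N <= n)%nat ->
    hnorm (hsub (u n) (u m)) < eps.

Definition hconverges (u : nat -> H) (l : H) : Prop :=
  forall eps, 0 < eps -> exists N, forall n, (N <= n)%nat -> hnorm (hsub (u n) l) < eps.

Lemma hcauchy_converges (u : nat -> H) : hcauchy u -> exists l, hconverges u l.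
Proof. exact (hcomplete u). Qed.

Lemma hconverges_cauchy (u : nat -> H) (l : H) : hconverges u l -> hcauchy u.
Proof.
  intros Hu eps He. destruct (Hu (eps / 2) ltac:(lra)) as [N HN].
  exists N. intros m n Hm Hn.
  pose proof (hnorm_sub_triangle (u n) l (u m)). rewrite (hnorm_sub_sym l) in *.
  pose proof (HN m Hm). pose proof (HN n Hn). lra.
Qed.

Lemma hconverges_of_inv_bound (u : nat -> H) (l : H) :
  (forall n, hnorm (hsub (u n) l) < / (INR n + 1)) -> hconverges u l.
Proof.
  intros Hu eps He. destruct (inv_INR_small eps He) as [N HN].
  exists N. intros n Hn. specialize (HN n Hn). specialize (Hu n). lra.
Qed.

Definition seq_closed (M : H -> Prop) : Prop :=
  forall u l, (forall n, M (u n)) -> hconverges u l -> M l.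

Lemma closure_seq (M : H -> Prop) (x : H) :
  (forall eps, 0 < eps -> exists y, M y /\ hnorm (hsub x y) < eps) ->
  exists u, (forall n, M (u n)) /\ hconverges u x.
Proof.
  intro Hx.
  assert (Ex : forall n : nat, exists y, M y /\ hnorm (hsub y x) < / (INR n + 1)).
  { intro n. destruct (Hx _ (inv_INR_pos n)) as [y Hy]. rewrite hnorm_sub_sym in Hy. eauto. }
  exists (fun n => proj1_sig (constructive_indefinite_description _ (Ex n))).
  split.
  - intro n. destruct constructive_indefinite_description as [y Hy]. apply Hy.
  - apply hconverges_of_inv_bound. intro n.
    destruct constructive_indefinite_description as [y Hy]. apply Hy.
Qed.

End Norms.

(** * The Hilbert space h^2 *)

Section PairSpace.
Variable H : CHilbert.

Definition pip (f g : H * H) : C := Cplus (hip (fst f) (fst g)) (hip (snd f) (snd g)).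

Lemma pair_norm_fst (x y : H) : hnorm x <= sqrt (nsq x + nsq y).
Proof. apply sqrt_le_1_alt. pose proof (nsq_ge0 y). unfold nsq in *. lra. Qed.

Lemma pair_norm_snd (x y : H) : hnorm y <= sqrt (nsq x + nsq y).
Proof. rewrite Rplus_comm. apply pair_norm_fst. Qed.

Lemma pair_complete (u : nat -> H * H) :
  (forall eps, 0 < eps -> exists N, forall m n, (N <= m)%nat -> (N <= n)%nat ->
     sqrt (nsq (hsub (fst (u n)) (fst (u m))) + nsq (hsub (snd (u n)) (snd (u m)))) < eps) ->
  exists l, forall eps, 0 < eps -> exists N, forall n, (N <= n)%nat ->
     sqrt (nsq (hsub (fst (u n)) (fst l)) + nsq (hsub (snd (u n)) (snd l))) < eps.
Proof.
  intro Hu.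
  assert (C1 : hcauchy (fun n => fst (u n))).
  { intros eps He. destruct (Hu eps He) as [N HN]. exists N. intros m n Hm Hn.
    eapply Rle_lt_trans; [apply pair_norm_fst|exact (HN m n Hm Hn)]. }
  assert (C2 : hcauchy (fun n => snd (u n))).
  { intros eps He. destruct (Hu eps He) as [N HN]. exists N. intros m n Hm Hn.
    eapply Rle_lt_trans; [apply pair_norm_snd|exact (HN m n Hm Hn)]. }
  destruct (hcauchy_converges _ C1) as [l1 L1], (hcauchy_converges _ C2) as [l2 L2].
  exists (l1, l2). intros eps He.
  destruct (L1 (eps / 2) ltac:(lra)) as [N1 HN1], (L2 (eps / 2) ltac:(lra)) as [N2 HN2].
  exists (Nat.max N1 N2). intros n Hn.
  specialize (HN1 n ltac:(lia)). specialize (HN2 n ltac:(lia)).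
  eapply Rle_lt_trans; [apply sqrt_plus_le; apply nsq_ge0|]. simpl. unfold hnorm, nsq in *. lra.
Qed.

Definition prodH : CHilbert.
Proof.
  refine (Build_CHilbert (H * H) (h0, h0) padd
    (fun f => (hopp (fst f), hopp (snd f))) pscal pip _ _ _ _ _ _ _ _ _ _ _ _ _ pair_complete);
    unfold padd, pscal, pip.
  - intros [] [] []; simpl; f_equal; apply hadd_assoc.
  - intros [] []; simpl; f_equal; apply hadd_comm.
  - intros []; simpl; f_equal; apply hadd_0.
  - intros []; simpl; f_equal; apply hadd_opp.
  - intros a b []; simpl; f_equal; apply hscal_assoc.
  - intros []; simpl; f_equal; apply hscal_1.
  - intros a [] []; simpl; f_equal; apply hscal_distr_l.
  - intros a b []; simpl; f_equal; apply hscal_distr_r.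
  - intros [] [] []; simpl. rewrite !hip_add_l. ring.
  - intros a [] []; simpl. rewrite !hip_scal_l. ring.
  - intros [] []; simpl. rewrite Cplus_conj, <- !hip_conj. reflexivity.
  - intros [x y]. change (0 <= nsq x + nsq y).
    pose proof (nsq_ge0 x); pose proof (nsq_ge0 y). lra.
  - intros [x y] E. assert (E' : nsq x + nsq y = 0) by exact (f_equal Re E).
    pose proof (nsq_ge0 x); pose proof (nsq_ge0 y).
    f_equal; apply nsq_eq0; lra.
Defined.

Lemma pnorm_hnorm (f : H * H) : pnorm f = hnorm (f : prodH).
Proof. unfold pnorm, hnorm at 3. simpl. rewrite !Rmult_1_r, !hnorm_sq. reflexivity. Qed.

Lemma hnorm_pair_le (x y : H) : hnorm ((x, y) : prodH) <= hnorm x + hnorm y.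
Proof.
  change (sqrt (nsq x + nsq y) <= sqrt (nsq x) + sqrt (nsq y)).
  apply sqrt_plus_le; apply nsq_ge0.
Qed.

End PairSpace.

Section Subspace.
Context {H : CHilbert}.

Definition hsubspace (M : H -> Prop) : Prop :=
  M h0 /\ (forall x y, M x -> M y -> M (hadd x y)) /\ (forall a x, M x -> M (hscal a x)).

Lemma hsubspace_sub (M : H -> Prop) x y : hsubspace M -> M x -> M y -> M (hsub x y).
Proof. intros [_ [Madd Mscal]] Mx My. unfold hsub. rewrite hopp_scal. auto. Qed.

End Subspace.

Section Operators.
Context {H1 H2 : CHilbert}.
Variables (D : H1 -> Prop) (T : H1 -> H2).

Definition linear_on : Prop :=
  forall a f g, D f -> D g -> T (hadd (hscal a f) g) = hadd (hscal a (T f)) (T g).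

Definition bounded_op : Prop := exists c, forall f, D f -> hnorm (T f) <= c * hnorm f.

Definition weakly_bounded : Prop :=
  forall k, exists M, forall f, D f -> Cmod (hip (T f) k) <= M * hnorm f.

Hypothesis HD : hsubspace D.
Hypothesis HT : linear_on.

Lemma linear_on_0 : T h0 = h0.
Proof.
  destruct HD as [D0 _]. apply hadd_idem_eq0.
  pose proof (HT (RtoC 1) h0 h0 D0 D0) as E. rewrite !hscal_1, hadd_0 in E. auto.
Qed.

Lemma linear_on_scal a f : D f -> T (hscal a f) = hscal a (T f).
Proof.
  intro Df. destruct HD as [D0 _].
  rewrite <- (hadd_0 (hscal a f)), HT, linear_on_0 by auto. apply hadd_0.
Qed.

Lemma linear_on_sub f g : D f -> D g -> T (hsub f g) = hsub (T f) (T g).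
Proof.
  intros Df Dg. replace (hsub f g) with (hadd (hscal (Copp (RtoC 1)) g) f) by hvec_eq.
  rewrite HT by auto. hvec_eq.
Qed.

Lemma bounded_op_cauchy (u : nat -> H1) :
  bounded_op -> (forall n, D (u n)) -> hcauchy u -> hcauchy (fun n => T (u n)).
Proof.
  intros [c Hc] Du Cu eps He.
  set (c' := Rabs c + 1).
  assert (Hc' : 0 < c') by (unfold c'; pose proof (Rabs_pos c); lra).
  destruct (Cu (eps / c') ltac:(apply Rdiv_lt_0_compat; lra)) as [N HN].
  exists N. intros m n Hm Hn. specialize (HN m n Hm Hn).
  rewrite <- linear_on_sub by auto.
  eapply Rle_lt_trans; [apply Hc, hsubspace_sub; auto|].
  pose proof (hnorm_ge0 (hsub (u n) (u m))). pose proof (Rle_abs c).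
  apply Rle_lt_trans with (c' * hnorm (hsub (u n) (u m))); [unfold c'; nra|].
  apply (Rmult_lt_compat_l c') in HN; auto.
  replace (c' * (eps / c')) with eps in HN by (field; lra). exact HN.
Qed.

End Operators.

(** * Uniform boundedness *)

Section GlidingHump.
Context {H : CHilbert}.
Variable y : nat -> H.
Hypothesis y_nonzero : forall n, 0 < hnorm (y n).

Let radius (n : nat) : R := (/3) ^ S n.

Lemma radius_pos n : 0 < radius n.
Proof. apply pow_lt. lra. Qed.

Let unit_y n : H := hscal (RtoC (/ hnorm (y n))) (y n).

Lemma hip_unit_y n : hip (unit_y n) (y n) = RtoC (hnorm (y n)).
Proof.
  unfold unit_y. rewrite hip_scal_l, hip_self, <- RtoC_mult, <- hnorm_sq.
  f_equal. pose proof (y_nonzero n). field. lra.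
Qed.

Lemma hnorm_unit_y n : hnorm (unit_y n) = 1.
Proof.
  pose proof (y_nonzero n). unfold unit_y.
  rewrite hnorm_scal, Cmod_R, Rabs_pos_eq by (left; apply Rinv_0_lt_compat; lra).
  field. lra.
Qed.

(* The two candidates x +- radius n * unit_y n have inner products with y n
   differing by 2 radius n |y n|, so one of them is at least radius n |y n|. *)
Let step n (x : H) : H :=
  let v := hadd x (hscal (RtoC (radius n)) (unit_y n)) in
  if Rle_dec (radius n * hnorm (y n)) (Cmod (hip v (y n))) then v
  else hsub x (hscal (RtoC (radius n)) (unit_y n)).

Fixpoint hump (n : nat) : H := match n with O => h0 | S n => step n (hump n) end.

Lemma hump_large n : radius n * hnorm (y n) <= Cmod (hip (hump (S n)) (y n)).
Proof.
  simpl. unfold step. destruct Rle_dec as [E|E]; auto.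
  apply Rnot_le_lt in E.
  rewrite hip_add_l, hip_scal_l, hip_unit_y in E.
  unfold hsub. rewrite hip_add_l, hip_opp_l, hip_scal_l, hip_unit_y.
  set (c := hip (hump n) (y n)) in *.
  set (d := Cmult (RtoC (radius n)) (RtoC (hnorm (y n)))) in *.
  assert (Hd : Cmod d = radius n * hnorm (y n)).
  { unfold d. rewrite <- RtoC_mult, Cmod_R, Rabs_pos_eq; auto.
    pose proof (radius_pos n); pose proof (y_nonzero n). nra. }
  pose proof (Cmod_minus_le (Cplus c d) (Cplus c (Copp d))) as T.
  replace (Cminus (Cplus c d) (Cplus c (Copp d))) with (Cmult (RtoC 2) d) in T by ring.
  rewrite Cmod_mult, Cmod_R, Rabs_pos_eq in T by lra.
  lra.
Qed.

Lemma hump_step n : hnorm (hsub (hump (S n)) (hump n)) = radius n.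
Proof.
  pose proof (radius_pos n). simpl. unfold step. destruct Rle_dec.
  - replace (hsub (hadd (hump n) (hscal (RtoC (radius n)) (unit_y n))) (hump n))
      with (hscal (RtoC (radius n)) (unit_y n)) by hvec_eq.
    rewrite hnorm_scal, hnorm_unit_y, Cmod_R, Rabs_pos_eq; lra.
  - replace (hsub (hsub (hump n) (hscal (RtoC (radius n)) (unit_y n))) (hump n))
      with (hscal (Copp (RtoC (radius n))) (unit_y n)) by hvec_eq.
    rewrite hnorm_scal, hnorm_unit_y, Cmod_opp, Cmod_R, Rabs_pos_eq; lra.
Qed.

Lemma hump_dist n d : hnorm (hsub (hump (n + d)) (hump n)) <= (/3) ^ n / 2 * (1 - (/3) ^ d).
Proof.
  induction d as [|d IH].
  - rewrite Nat.add_0_r. replace (hsub (hump n) (hump n)) with (h0 : H) by hvec_eq.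
    rewrite hnorm_h0. simpl. lra.
  - eapply Rle_trans; [apply (hnorm_sub_triangle _ (hump (n + d)))|].
    rewrite Nat.add_succ_r, hump_step. unfold radius.
    cbn [pow]. rewrite pow_add.
    pose proof (pow_lt (/3) n ltac:(lra)). pose proof (pow_lt (/3) d ltac:(lra)). nra.
Qed.

Lemma hump_cauchy : hcauchy hump.
Proof.
  intros eps He.
  destruct (pow_lt_1_zero (/3) ltac:(rewrite Rabs_pos_eq; lra) eps He) as [N HN].
  specialize (HN N (le_n N)). rewrite Rabs_pos_eq in HN by (left; apply pow_lt; lra).
  exists N. intros m n Hm Hn.
  eapply Rle_lt_trans; [apply (hnorm_sub_triangle _ (hump N))|].
  rewrite (hnorm_sub_sym (hump N)).
  replace n with (N + (n - N))%nat by lia. replace m with (N + (m - N))%nat by lia.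
  pose proof (hump_dist N (n - N)). pose proof (hump_dist N (m - N)).
  pose proof (pow_lt (/3) (n - N) ltac:(lra)). pose proof (pow_lt (/3) (m - N) ltac:(lra)).
  pose proof (pow_lt (/3) N ltac:(lra)). nra.
Qed.

Lemma gliding_hump : exists l, forall n, radius n / 2 * hnorm (y n) <= Cmod (hip l (y n)).
Proof.
  destruct (hcauchy_converges hump hump_cauchy) as [l Hl].
  exists l. intro n.
  assert (Dl : hnorm (hsub l (hump (S n))) <= radius n / 2).
  { apply le_eps. intros eps He. destruct (Hl eps He) as [N HN].
    set (m := Nat.max N (S n)). specialize (HN m ltac:(unfold m; lia)).
    rewrite hnorm_sub_sym in HN.
    pose proof (hump_dist (S n) (m - S n)) as Hd.
    replace (S n + (m - S n))%nat with m in Hd by (unfold m; lia).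
    pose proof (pow_lt (/3) (m - S n) ltac:(lra)).
    pose proof (hnorm_sub_triangle l (hump m) (hump (S n))). pose proof (radius_pos n). unfold radius in *. nra. }
  replace (hip l (y n)) with (Cplus (hip (hump (S n)) (y n)) (hip (hsub l (hump (S n))) (y n)))
    by (hip_expand; ring).
  pose proof (hump_large n). pose proof (Cauchy_Schwarz (hsub l (hump (S n))) (y n)).
  pose proof (Cmod_minus_le (Cplus (hip (hump (S n)) (y n)) (hip (hsub l (hump (S n))) (y n)))
                (hip (hsub l (hump (S n))) (y n))) as T.
  replace (Cminus (Cplus (hip (hump (S n)) (y n)) (hip (hsub l (hump (S n))) (y n)))
                  (hip (hsub l (hump (S n))) (y n))) with (hip (hump (S n)) (y n)) in T by ring.
  pose proof (y_nonzero n). nra.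
Qed.

End GlidingHump.

Lemma pow_4_3_ge (n : nat) : 1 + INR n / 3 <= (4/3) ^ n.
Proof. induction n as [|n IH]; [simpl; lra|]. rewrite S_INR. simpl. pose proof (pos_INR n). nra. Qed.

Lemma uniform_boundedness {H : CHilbert} (B : H -> Prop) :
  (forall k, exists M, forall y, B y -> Cmod (hip y k) <= M) ->
  exists C, forall y, B y -> hnorm y <= C.
Proof.
  intro Hw. apply NNPP. intro Unb.
  assert (Ex : forall n : nat, exists y, B y /\ 4 ^ n < hnorm y).
  { intro n. apply NNPP. intro K. apply Unb. exists (4 ^ n). intros y Sy.
    apply Rnot_lt_le. intro L. apply K. eauto. }
  set (y n := proj1_sig (constructive_indefinite_description _ (Ex n))).
  assert (Hy : forall n, B (y n) /\ 4 ^ n < hnorm (y n)).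
  { intro n. unfold y. destruct constructive_indefinite_description. auto. }
  destruct (gliding_hump y) as [l Hl].
  { intro n. pose proof (pow_lt 4 n ltac:(lra)). pose proof (proj2 (Hy n)). lra. }
  destruct (Hw l) as [M HM].
  (* |(l, y n)| >= (1/3)^(n+1) 4^n / 2 = (4/3)^n / 6 is unbounded *)
  destruct (archimed (18 * Rabs M)) as [A _].
  set (n := Z.to_nat (up (18 * Rabs M))).
  assert (Hn : INR n >= 18 * Rabs M).
  { unfold n. rewrite INR_IZR_INZ, Z2Nat.id. lra. apply le_IZR. pose proof (Rabs_pos M). lra. }
  specialize (Hl n). specialize (HM (y n) (proj1 (Hy n))).
  rewrite (hip_conj (y n)), Cmod_conj in HM.
  assert (E : (/3) ^ S n * 4 ^ n = /3 * (4/3) ^ n).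
  { simpl. replace (4/3) with (4 * /3) by lra. rewrite Rpow_mult_distr. ring. }
  pose proof (pow_4_3_ge n). pose proof (proj2 (Hy n)). pose proof (Rle_abs M).
  pose proof (pow_lt (/3) (S n) ltac:(lra)). nra.
Qed.

Lemma bounded_of_weakly_bounded {H1 H2 : CHilbert} (D : H1 -> Prop) (T : H1 -> H2) :
  hsubspace D -> linear_on D T -> weakly_bounded D T -> bounded_op D T.
Proof.
  intros HD HT Hw.
  destruct (uniform_boundedness (fun y => exists f, D f /\ hnorm f <= 1 /\ y = T f)) as [C HC].
  { intros k. destruct (Hw k) as [M HM]. exists (Rabs M).
    intros y [f [Df [Nf ->]]]. eapply Rle_trans; [apply HM; auto|].
    pose proof (Rle_abs M). pose proof (Rabs_pos M). pose proof (hnorm_ge0 f). nra. }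
  exists C. intros f Df.
  destruct (Req_dec (hnorm f) 0) as [E|E].
  { apply hnorm_eq0 in E. subst f. rewrite (linear_on_0 D T HD HT), !hnorm_h0. lra. }
  pose proof (hnorm_ge0 f). set (t := hnorm f) in *.
  assert (Ht : 0 < /t) by (apply Rinv_0_lt_compat; lra).
  assert (K : hnorm (T (hscal (RtoC (/ t)) f)) <= C).
  { apply HC. exists (hscal (RtoC (/t)) f). split; [apply HD; auto|split; auto].
    rewrite hnorm_scal, Cmod_R, Rabs_pos_eq by lra. unfold t. right; field. auto. }
  rewrite (linear_on_scal D T HD HT), hnorm_scal, Cmod_R, Rabs_pos_eq in K by (auto || lra).
  apply (Rmult_le_compat_l t) in K; [|lra].
  replace (t * (/ t * hnorm (T f))) with (hnorm (T f)) in K by (field; lra). lra.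
Qed.

(** * Orthogonal projection and the Riesz representation theorem *)

Lemma hcauchy_of_inv_bound {H : CHilbert} (u : nat -> H) (c : R) :
  (forall i j, hnorm (hsub (u i) (u j)) <= c * (/ (INR i + 1) + / (INR j + 1))) -> hcauchy u.
Proof.
  intros Hu eps He. set (c' := Rabs c + 1).
  assert (Hc' : 0 < c') by (unfold c'; pose proof (Rabs_pos c); lra).
  destruct (inv_INR_small (eps / (2 * c'))) as [N HN]; [apply Rdiv_lt_0_compat; lra|].
  exists N. intros m n Hm Hn. eapply Rle_lt_trans; [apply Hu|].
  pose proof (HN m Hm). pose proof (HN n Hn). pose proof (inv_INR_pos m).
  pose proof (inv_INR_pos n). pose proof (Rle_abs c).
  apply Rle_lt_trans with (c' * (/ (INR n + 1) + / (INR m + 1))); [unfold c'; nra|].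
  replace eps with (c' * (eps / (2 * c') + eps / (2 * c'))) by (field; lra).
  apply Rmult_lt_compat_l; lra.
Qed.

Lemma parallelogram_midpoint {H : CHilbert} (z a b : H) :
  nsq (hsub a b) = 2 * nsq (hsub z a) + 2 * nsq (hsub z b)
                   - 4 * nsq (hsub z (hscal (RtoC (/2)) (hadd a b))).
Proof.
  assert (E : hip (hsub a b) (hsub a b) =
     Cminus (Cplus (Cmult (RtoC 2) (hip (hsub z a) (hsub z a)))
                   (Cmult (RtoC 2) (hip (hsub z b) (hsub z b))))
      (Cmult (RtoC 4) (hip (hsub z (hscal (RtoC (/2)) (hadd a b)))
                           (hsub z (hscal (RtoC (/2)) (hadd a b)))))).
  { hip_expand. rewrite RtoC_inv by lra. field. }
  unfold nsq. rewrite E, !hip_self. simpl. ring.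
Qed.

Section Projection.
Context {H : CHilbert}.
Variable N : H -> Prop.
Hypothesis HN : hsubspace N.
Hypothesis HNc : seq_closed N.
Variable z : H.

Lemma dist_inf : exists d, 0 <= d /\ (forall n, N n -> d <= nsq (hsub z n)) /\
  (forall e, 0 < e -> exists n, N n /\ nsq (hsub z n) < d + e).
Proof.
  set (E r := exists n, N n /\ r = - nsq (hsub z n)).
  assert (Eb : bound E).
  { exists 0. intros r [n [_ ->]]. pose proof (nsq_ge0 (hsub z n)). lra. }
  assert (Ene : exists r, E r).
  { exists (- nsq (hsub z h0)), h0. split; auto. apply HN. }
  destruct (completeness E Eb Ene) as [m [Ub Lub]].
  exists (- m). split; [|split].
  - enough (m <= 0) by lra. apply Lub. intros r [n [_ ->]].
    pose proof (nsq_ge0 (hsub z n)). lra.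
  - intros n Nn. specialize (Ub _ (ex_intro _ n (conj Nn eq_refl))). lra.
  - intros e He. apply NNPP. intro K.
    enough (m <= m - e) by lra. apply Lub. intros r [n [Nn ->]].
    apply Rnot_lt_le. intro L. apply K. exists n. split; auto. lra.
Qed.

Lemma nearest_point : exists p, N p /\ forall n, N n -> nsq (hsub z p) <= nsq (hsub z n).
Proof.
  destruct dist_inf as [d [Hd0 [Hlow Happ]]].
  assert (Ex : forall j : nat, exists n, N n /\ nsq (hsub z n) < d + (/ (INR j + 1)) ^ 2).
  { intro j. apply Happ. apply pow_lt, inv_INR_pos. }
  set (s j := proj1_sig (constructive_indefinite_description _ (Ex j))).
  assert (Hs : forall j, N (s j) /\ nsq (hsub z (s j)) < d + (/ (INR j + 1)) ^ 2).
  { intro j. unfold s. destruct constructive_indefinite_description. auto. }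
  assert (Cs : hcauchy s).
  { apply (hcauchy_of_inv_bound s 2). intros i j.
    pose proof (inv_INR_pos i); pose proof (inv_INR_pos j).
    apply hnorm_le; [nra|]. rewrite (parallelogram_midpoint z).
    pose proof (Hlow (hscal (RtoC (/2)) (hadd (s i) (s j)))
       ltac:(apply HN, HN; apply Hs)).
    pose proof (proj2 (Hs i)); pose proof (proj2 (Hs j)). nra. }
  destruct (hcauchy_converges s Cs) as [p Hp].
  exists p. split; [exact (HNc s p (fun j => proj1 (Hs j)) Hp)|].
  intros n Nn. eapply Rle_trans; [|exact (Hlow n Nn)].
  (* |z - p| <= |z - s j| + |s j - p| <= sqrt d + 1/(j+1) + |s j - p| *)
  enough (hnorm (hsub z p) <= sqrt d) by
    (rewrite <- hnorm_sq, <- (sqrt_sqrt d Hd0); pose proof (hnorm_ge0 (hsub z p)); nra).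
  apply le_eps. intros eps He.
  destruct (Hp (eps / 2) ltac:(lra)) as [N1 HN1].
  destruct (inv_INR_small (eps / 2) ltac:(lra)) as [N2 HN2].
  set (j := Nat.max N1 N2).
  specialize (HN1 j ltac:(unfold j; lia)). specialize (HN2 j ltac:(unfold j; lia)).
  assert (Hzs : hnorm (hsub z (s j)) <= sqrt d + / (INR j + 1)).
  { pose proof (inv_INR_pos j).
    rewrite <- (sqrt_pow2 (/ (INR j + 1))) by lra.
    eapply Rle_trans; [|apply sqrt_plus_le; [lra|nra]].
    apply sqrt_le_1_alt. left. apply (proj2 (Hs j)). }
  pose proof (hnorm_sub_triangle z (s j) p). lra.
Qed.

Lemma nearest_point_orthogonal (p : H) : N p ->
  (forall n, N n -> nsq (hsub z p) <= nsq (hsub z n)) ->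
  forall n, N n -> hip (hsub z p) n = RtoC 0.
Proof.
  intros Np Pmin n Nn. set (w := hsub z p). set (c := hip w n).
  apply NNPP. intro Hc.
  assert (Cm : 0 < Cmod c) by (apply Cmod_gt_0; auto).
  pose proof (nsq_ge0 n).
  (* moving p by t n with t = c / (|n|^2 + 1) strictly decreases |z - p| *)
  set (sc := / (nsq n + 1)).
  assert (Hsc : 0 < sc) by (apply Rinv_0_lt_compat; lra).
  assert (Hsc2 : sc * nsq n < 1).
  { unfold sc. apply (Rmult_lt_reg_l (nsq n + 1)); [lra|].
    replace ((nsq n + 1) * (/ (nsq n + 1) * nsq n)) with (nsq n) by (field; lra). lra. }
  set (t := Cmult (RtoC sc) c).
  assert (Id : nsq (hsub z (hadd p (hscal t n))) =
               nsq w - 2 * sc * Cmod c ^ 2 + sc * sc * Cmod c ^ 2 * nsq n).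
  { replace (hsub z (hadd p (hscal t n))) with (hsub w (hscal t n)) by (unfold w; hvec_eq).
    unfold nsq at 1.
    assert (E : hip (hsub w (hscal t n)) (hsub w (hscal t n)) =
      Cplus (hip w w) (Cplus (Copp (Cmult (RtoC (2 * sc)) (Cmult c (Cconj c))))
         (Cmult (RtoC (sc * sc)) (Cmult (Cmult c (Cconj c)) (hip n n))))).
    { hip_expand. rewrite (hip_conj n w). fold c. unfold t.
      rewrite Cmult_conj, Cconj_R, !RtoC_mult. ring. }
    rewrite E, <- Cmod2_conj, !hip_self, <- !RtoC_mult, <- RtoC_opp, <- !RtoC_plus.
    simpl. ring. }
  pose proof (Pmin (hadd p (hscal t n)) ltac:(apply HN; [exact Np|apply HN; exact Nn])) as Hmin.
  rewrite Id in Hmin. fold w in Hmin.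
  pose proof (pow_lt (Cmod c) 2 Cm).
  assert (sc * Cmod c ^ 2 * (sc * nsq n - 2) < 0).
  { assert (0 < sc * Cmod c ^ 2) by (apply Rmult_lt_0_compat; auto).
    assert (sc * nsq n - 2 < 0) by lra. nra. }
  nra.
Qed.

Lemma orthogonal_projection : exists p, N p /\ forall n, N n -> hip (hsub z p) n = RtoC 0.
Proof.
  destruct nearest_point as [p [Np Pmin]].
  exists p. split; auto. apply nearest_point_orthogonal; auto.
Qed.

End Projection.

Section Riesz.
Context {H : CHilbert}.
Variables (M : H -> Prop) (phi : H -> C).
Hypothesis HM : hsubspace M.
Hypothesis HMc : seq_closed M.
Hypothesis phi_linear : forall a f g, M f -> M g ->
  phi (hadd (hscal a f) g) = Cplus (Cmult a (phi f)) (phi g).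
Variable c : R.
Hypothesis phi_bounded : forall f, M f -> Cmod (phi f) <= c * hnorm f.

Lemma functional_0 : phi h0 = RtoC 0.
Proof.
  destruct HM as [M0 _]. pose proof (phi_linear (RtoC 1) h0 h0 M0 M0) as E.
  rewrite hscal_1, hadd_0 in E.
  replace (phi h0) with (Cminus (Cplus (Cmult (RtoC 1) (phi h0)) (phi h0)) (phi h0)) at 1 by ring.
  rewrite <- E. ring.
Qed.

Lemma functional_scal a f : M f -> phi (hscal a f) = Cmult a (phi f).
Proof.
  intro Mf. destruct HM as [M0 _].
  rewrite <- (hadd_0 (hscal a f)), phi_linear, functional_0 by auto. ring.
Qed.

Lemma functional_sub f g : M f -> M g -> phi (hsub f g) = Cminus (phi f) (phi g).
Proof.
  intros Mf Mg. replace (hsub f g) with (hadd (hscal (Copp (RtoC 1)) g) f) by hvec_eq.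
  rewrite phi_linear by auto. ring.
Qed.

Let kernel (g : H) : Prop := M g /\ phi g = RtoC 0.

Lemma kernel_subspace : hsubspace kernel.
Proof.
  destruct HM as [M0 [Madd Mscal]]. split; [|split].
  - split; auto. apply functional_0.
  - intros x y [Mx Px] [My Py]. split; auto.
    rewrite <- (hscal_1 x), phi_linear, Px, Py by auto. ring.
  - intros a x [Mx Px]. split; auto. rewrite functional_scal, Px by auto. ring.
Qed.

Lemma kernel_closed : seq_closed kernel.
Proof.
  intros u x Ku Hu. assert (Mx : M x) by (apply (HMc u); auto; apply Ku).
  split; auto. apply Ceq_of_small. intros eps He. set (c' := Rabs c + 1).
  assert (Hc' : 0 < c') by (unfold c'; pose proof (Rabs_pos c); lra).
  destruct (Hu (eps / c') ltac:(apply Rdiv_lt_0_compat; lra)) as [N HN].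
  specialize (HN N (le_n N)). destruct (Ku N) as [MuN PuN].
  replace (Cminus (phi x) (RtoC 0)) with (phi (hsub x (u N)))
    by (rewrite functional_sub, PuN by auto; ring).
  rewrite hnorm_sub_sym in HN.
  eapply Rle_trans; [apply phi_bounded, hsubspace_sub; auto|].
  pose proof (Rle_abs c). pose proof (hnorm_ge0 (hsub x (u N))).
  apply Rle_trans with (c' * hnorm (hsub x (u N))); [unfold c'; nra|].
  apply (Rmult_lt_compat_l c') in HN; [|lra].
  replace (c' * (eps / c')) with eps in HN by (field; lra). lra.
Qed.

Lemma riesz_representation : exists v, forall g, M g -> phi g = hip g v.
Proof.
  destruct (classic (exists z, M z /\ phi z <> RtoC 0)) as [[z [Mz Pz]]|Zero].
  2:{ exists h0. intros g Mg. rewrite hip_0r. apply NNPP. intro K. apply Zero. eauto. }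
  destruct (orthogonal_projection kernel kernel_subspace kernel_closed z)
    as [p [[Mp Pp] Orth]].
  set (w := hsub z p).
  assert (Mw : M w) by (apply hsubspace_sub; auto).
  assert (Pw : phi w <> RtoC 0) by (unfold w; rewrite functional_sub, Pp by auto;
                                     replace (Cminus (phi z) (RtoC 0)) with (phi z) by ring; auto).
  assert (Nw : RtoC (nsq w) <> RtoC 0).
  { intros K. injection K; intros K'. apply nsq_eq0 in K'.
    apply Pw. rewrite K'. apply functional_0. }
  exists (hscal (Cdiv (Cconj (phi w)) (RtoC (nsq w))) w).
  intros g Mg.
  assert (Kg : kernel (hsub g (hscal (Cdiv (phi g) (phi w)) w))).
  { split. { apply hsubspace_sub; auto. apply HM; auto. }
    rewrite functional_sub, functional_scal by (auto || apply HM; auto). field. auto. }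
  pose proof (Orth _ Kg) as O. fold w in O.
  rewrite hip_conj in O. apply (f_equal Cconj) in O.
  rewrite Cconj_conj, Cconj_R in O. revert O. hip_expand. rewrite hip_self.
  rewrite Cdiv_conj, Cconj_conj, Cconj_R by exact Nw. intro O.
  assert (E : hip g w = Cmult (Cdiv (phi g) (phi w)) (RtoC (nsq w))).
  { replace (hip g w) with (Cplus (Cplus (hip g w) (Copp (Cmult (Cdiv (phi g) (phi w)) (RtoC (nsq w)))))
                                  (Cmult (Cdiv (phi g) (phi w)) (RtoC (nsq w)))) by ring.
    rewrite O. ring. }
  rewrite E. field. auto.
Qed.

End Riesz.

(** * Boundary triples *)

Section KreinForm.
Context {H : CHilbert}.

Lemma hnorm_fst_le (f : H * H) : hnorm (fst f) <= pnorm f.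
Proof. rewrite pnorm_hnorm. apply pair_norm_fst. Qed.

Lemma hnorm_snd_le (f : H * H) : hnorm (snd f) <= pnorm f.
Proof. rewrite pnorm_hnorm. apply pair_norm_snd. Qed.

Lemma pnorm_ge0 (f : H * H) : 0 <= pnorm f.
Proof. apply sqrt_pos. Qed.

Lemma kform_bound (f g : H * H) : Cmod (kform f g) <= 2 * pnorm f * pnorm g.
Proof.
  unfold kform. eapply Rle_trans; [apply Cmod_minus_le|].
  pose proof (Cauchy_Schwarz (snd f) (fst g)). pose proof (Cauchy_Schwarz (fst f) (snd g)).
  pose proof (hnorm_fst_le f). pose proof (hnorm_snd_le f).
  pose proof (hnorm_fst_le g). pose proof (hnorm_snd_le g).
  pose proof (hnorm_ge0 (fst f)). pose proof (hnorm_ge0 (snd f)).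
  pose proof (hnorm_ge0 (fst g)). pose proof (hnorm_ge0 (snd g)).
  assert (hnorm (snd f) * hnorm (fst g) <= pnorm f * pnorm g) by (apply Rmult_le_compat; auto).
  assert (hnorm (fst f) * hnorm (snd g) <= pnorm f * pnorm g) by (apply Rmult_le_compat; auto).
  lra.
Qed.

Lemma kform_linear_l (a : C) (f g k : H * H) :
  kform (padd (pscal a f) g) k = Cplus (Cmult a (kform f k)) (kform g k).
Proof. unfold kform. simpl. hip_expand. ring. Qed.

Lemma kform_sub_r (a x y : H * H) : Cminus (kform a x) (kform a y) = kform a (psub x y).
Proof. unfold kform. simpl. hip_expand. ring. Qed.

End KreinForm.

Lemma kform_limit {H1 H2 : CHilbert} (a : H1 * H1) (b : H2 * H2)
  (u : nat -> H1 * H1) (v : nat -> H2 * H2) (x : H1 * H1) (y : H2 * H2) :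
  (forall n, kform a (u n) = kform b (v n)) ->
  hconverges (H := prodH H1) u x -> hconverges (H := prodH H2) v y ->
  kform a x = kform b y.
Proof.
  intros Huv Hu Hv. apply Ceq_of_small. intros eps He.
  set (Q := 2 * pnorm a + 2 * pnorm b + 1).
  assert (HQ : 0 < Q) by (unfold Q; pose proof (pnorm_ge0 a); pose proof (pnorm_ge0 b); lra).
  destruct (Hu (eps / Q) ltac:(apply Rdiv_lt_0_compat; lra)) as [N1 HN1].
  destruct (Hv (eps / Q) ltac:(apply Rdiv_lt_0_compat; lra)) as [N2 HN2].
  set (n := Nat.max N1 N2).
  specialize (HN1 n ltac:(unfold n; lia)). specialize (HN2 n ltac:(unfold n; lia)).
  change (hnorm (H := prodH H1) (psub (u n) x) < eps / Q) in HN1.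
  change (hnorm (H := prodH H2) (psub (v n) y) < eps / Q) in HN2.
  rewrite <- pnorm_hnorm in HN1, HN2.
  replace (Cminus (kform a x) (kform b y))
    with (Cminus (kform b (psub (v n) y)) (kform a (psub (u n) x)))
    by (rewrite <- !kform_sub_r, Huv; ring).
  eapply Rle_trans; [apply Cmod_minus_le|].
  pose proof (kform_bound b (psub (v n) y)). pose proof (kform_bound a (psub (u n) x)).
  pose proof (pnorm_ge0 a). pose proof (pnorm_ge0 b).
  pose proof (pnorm_ge0 (psub (v n) y)). pose proof (pnorm_ge0 (psub (u n) x)).
  assert (Hd : 0 < eps / Q) by (apply Rdiv_lt_0_compat; lra).
  assert (E : (2 * pnorm a + 2 * pnorm b + 1) * (eps / Q) = eps) by (unfold Q; field; lra).
  assert (pnorm b * pnorm (psub (v n) y) <= pnorm b * (eps / Q)) by (apply Rmult_le_compat_l; lra).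
  assert (pnorm a * pnorm (psub (u n) x) <= pnorm a * (eps / Q)) by (apply Rmult_le_compat_l; lra).
  lra.
Qed.

Lemma bounded_on_op {h K : CHilbert} (D : lrel h) (G : h * h -> K) :
  bounded_on D G <-> bounded_op (H1 := prodH h) D G.
Proof.
  unfold bounded_on, bounded_op. split; intros [c Hc]; exists c; intros f Df;
    rewrite ?pnorm_hnorm in *; auto; rewrite <- pnorm_hnorm; auto.
Qed.

Section UnitaryBoundaryTriple.
Variables (h K : CHilbert) (A Astar : lrel h) (G0 G1 : h * h -> K).
Hypothesis HU : unitary_boundary_triple A K Astar G0 G1.

Let Gamma (f : h * h) : K * K := (G0 f, G1 f).

Lemma Astar_subspace : hsubspace (H := prodH h) Astar.
Proof. apply HU. Qed.

Lemma G0_linear : linear_on (H1 := prodH h) Astar G0.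
Proof. intros a f g Hf Hg. apply HU; auto. Qed.

Lemma G1_linear : linear_on (H1 := prodH h) Astar G1.
Proof. intros a f g Hf Hg. apply HU; auto. Qed.

Lemma green_identity f g : Astar f -> Astar g -> kform (Gamma g) (Gamma f) = kform g f.
Proof. intros Hf Hg. destruct HU as [_ [_ [Hu _]]]. exact (proj2 (Hu _ f) (conj Hf eq_refl) g Hg). Qed.

Lemma Gamma_maximal k f : (forall g, Astar g -> kform (Gamma g) k = kform g f) ->
  Astar f /\ k = Gamma f.
Proof. intro E. destruct HU as [_ [_ [Hu _]]]. exact (proj1 (Hu k f) E). Qed.

Lemma green_bound f g : Astar f -> Astar g ->
  Cmod (Cminus (hip (G1 f) (G0 g)) (hip (G0 f) (G1 g))) <= 2 * pnorm f * pnorm g.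
Proof.
  intros Hf Hg. change (Cmod (kform (Gamma f) (Gamma g)) <= 2 * pnorm f * pnorm g).
  rewrite green_identity by auto. apply kform_bound.
Qed.

Lemma green_bound_swap f g : Astar f -> Astar g ->
  Cmod (Cminus (hip (G0 f) (G1 g)) (hip (G1 f) (G0 g))) <= 2 * pnorm f * pnorm g.
Proof.
  intros Hf Hg. rewrite <- Cmod_opp.
  replace (Copp (Cminus (hip (G0 f) (G1 g)) (hip (G1 f) (G0 g))))
    with (Cminus (hip (G1 f) (G0 g)) (hip (G0 f) (G1 g))) by ring.
  apply green_bound; auto.
Qed.

Lemma weakly_bounded_of_green (P Q : h * h -> K) :
  (forall f g, Astar f -> Astar g ->
     Cmod (Cminus (hip (Q f) (P g)) (hip (P f) (Q g))) <= 2 * pnorm f * pnorm g) ->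
  (forall k, exists g, Astar g /\ P g = k /\
     exists C, forall f, Astar f -> Cmod (hip (P f) (Q g)) <= C * pnorm f) ->
  weakly_bounded (H1 := prodH h) Astar Q.
Proof.
  intros HG Hk k. destruct (Hk k) as [g [Hg [<- [C HC]]]].
  exists (2 * pnorm g + C). intros f Hf. rewrite <- pnorm_hnorm.
  replace (hip (Q f) (P g))
    with (Cplus (Cminus (hip (Q f) (P g)) (hip (P f) (Q g))) (hip (P f) (Q g))) by ring.
  eapply Rle_trans; [apply Cmod_triangle|].
  pose proof (HG f g Hf Hg). pose proof (HC f Hf). nra.
Qed.

Lemma bounded_partner (P Q : h * h -> K) :
  linear_on (H1 := prodH h) Astar Q ->
  (forall f g, Astar f -> Astar g ->
     Cmod (Cminus (hip (Q f) (P g)) (hip (P f) (Q g))) <= 2 * pnorm f * pnorm g) ->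
  bounded_on Astar P -> range_full Astar P -> bounded_on Astar Q.
Proof.
  intros HQ HG [c Hc] HR. apply bounded_on_op, bounded_of_weakly_bounded;
    [apply Astar_subspace|exact HQ|].
  apply (weakly_bounded_of_green P Q HG).
  intros k. destruct (HR k) as [g [Hg Eg]]. exists g. split; [auto|split; [auto|]].
  exists (Rabs c * hnorm (Q g)). intros f Hf.
  eapply Rle_trans; [apply Cauchy_Schwarz|].
  assert (hnorm (P f) <= Rabs c * pnorm f).
  { pose proof (Hc f Hf). pose proof (Rle_abs c). pose proof (pnorm_ge0 f). nra. }
  pose proof (hnorm_ge0 (Q g)). nra.
Qed.

Lemma Gamma_bounded : bounded_on Astar G0 -> bounded_on Astar G1 ->
  bounded_op (H1 := prodH h) (H2 := prodH K) Astar Gamma.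
Proof.
  intros [c0 Hc0] [c1 Hc1]. exists (c0 + c1). intros f Hf.
  eapply Rle_trans; [apply hnorm_pair_le|]. rewrite <- pnorm_hnorm.
  pose proof (Hc0 f Hf). pose proof (Hc1 f Hf). lra.
Qed.

Lemma Gamma_linear : linear_on (H1 := prodH h) (H2 := prodH K) Astar Gamma.
Proof.
  intros a f g Hf Hg. unfold Gamma. rewrite (G0_linear a f g), (G1_linear a f g) by auto.
  reflexivity.
Qed.

(* A bounded Gamma has closed domain: along a sequence in A_* converging to f,
   Gamma converges to some k, and Green's identity passes to the limit, so
   (f, k) is in Gamma^[*] = Gamma^-1. *)
Lemma Astar_seq_closed : bounded_on Astar G0 -> bounded_on Astar G1 ->
  seq_closed (H := prodH h) Astar.
Proof.
  intros B0 B1 u f Hu Cu.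
  assert (CGu : hcauchy (H := prodH K) (fun n => Gamma (u n))).
  { apply (bounded_op_cauchy (H1 := prodH h) (H2 := prodH K) Astar Gamma
             Astar_subspace Gamma_linear);
      [apply Gamma_bounded; auto|exact Hu|exact (hconverges_cauchy u f Cu)]. }
  destruct (hcauchy_converges _ CGu) as [k Hk].
  enough (E : forall g, Astar g -> kform (Gamma g) k = kform g f)
    by exact (proj1 (Gamma_maximal k f E)).
  intros g Hg. apply (kform_limit _ _ (fun n => Gamma (u n)) u); auto.
  intro n. apply green_identity; auto.
Qed.

Lemma Astar_closed : bounded_on Astar G0 -> bounded_on Astar G1 ->
  forall f, pclosure Astar f -> Astar f.
Proof.
  intros B0 B1 f Hf. destruct (closure_seq (H := prodH h) Astar f) as [u [Hu Cu]].
  { intros eps He. destruct (Hf eps He) as [g [Ag Ng]]. rewrite pnorm_hnorm in Ng. eauto. }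
  exact (Astar_seq_closed B0 B1 u f Hu Cu).
Qed.

(* Riesz: g |-> [Gamma g, k] is a bounded functional on the closed subspace A_*,
   represented by some v; then f := (v2, -v1) satisfies [Gamma g, k] = [g, f],
   i.e. (k, f) is in Gamma^[*] = Gamma^-1. *)
Lemma Gamma_surjective : bounded_on Astar G0 -> bounded_on Astar G1 ->
  forall k : K * K, exists f, Astar f /\ Gamma f = k.
Proof.
  intros B0 B1 k. destruct (Gamma_bounded B0 B1) as [c Hc].
  destruct (riesz_representation (H := prodH h) Astar (fun g => kform (Gamma g) k)
    Astar_subspace (Astar_seq_closed B0 B1)) with (c := 2 * c * pnorm k) as [v Hv].
  - intros a f g Hf Hg. simpl. rewrite <- kform_linear_l. f_equal. apply Gamma_linear; auto.
  - intros f Hf. eapply Rle_trans; [apply kform_bound|].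
    pose proof (Hc f Hf). rewrite <- !pnorm_hnorm in *. pose proof (pnorm_ge0 k). nra.
  - destruct (Gamma_maximal k (snd v, hopp (fst v))) as [Hf Ek].
    + intros g Hg. rewrite Hv by auto. unfold kform. simpl. unfold pip.
      rewrite hip_opp_r. ring.
    + exists (snd v, hopp (fst v)). auto.
Qed.

Lemma ordinary_of_bounded : bounded_on Astar G0 -> bounded_on Astar G1 ->
  ordinary_boundary_triple A K Astar G0 G1.
Proof.
  intros B0 B1. destruct HU as [_ [_ [_ Hcl]]].
  assert (Eq : forall f, Astar f <-> adjoint A f).
  { intro f. rewrite <- Hcl. split; [|apply Astar_closed; auto].
    intros Hf eps He. exists f. split; auto. rewrite pnorm_hnorm.
    change (hnorm (hsub (H := prodH h) f f) < eps).
    replace (hsub (H := prodH h) f f) with (h0 : prodH h) by hvec_eq. rewrite hnorm_h0. lra. }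
  split; [exact Eq|split; [|split]].
  - intros a f g Hf Hg. rewrite <- Eq in Hf, Hg. apply HU; auto.
  - intros f g Hf Hg. rewrite <- Eq in Hf, Hg. symmetry. exact (green_identity g f Hg Hf).
  - intros k0 k1. destruct (Gamma_surjective B0 B1 (k0, k1)) as [f [Hf Ef]].
    exists f. rewrite <- Eq. injection Ef. auto.
Qed.

Lemma bounded_range_of_ordinary : ordinary_boundary_triple A K Astar G0 G1 ->
  bounded_on Astar G0 /\ bounded_on Astar G1 /\ range_full Astar G0 /\ range_full Astar G1.
Proof.
  intros [Eq [_ [_ Sj]]].
  assert (Sj' : forall k0 k1, exists f, Astar f /\ G0 f = k0 /\ G1 f = k1).
  { intros k0 k1. destruct (Sj k0 k1) as [f Hf]. rewrite <- Eq in Hf. eauto. }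
  assert (B0 : bounded_on Astar G0).
  { apply bounded_on_op, bounded_of_weakly_bounded; [apply Astar_subspace|apply G0_linear|].
    apply (weakly_bounded_of_green G1 G0 green_bound_swap).
    intro k. destruct (Sj' h0 k) as [g [Hg [E0 E1]]]. exists g. split; [auto|split; [auto|]].
    exists 0. intros f _. rewrite E0, hip_0r, Cmod_0. lra. }
  assert (B1 : bounded_on Astar G1).
  { apply bounded_on_op, bounded_of_weakly_bounded; [apply Astar_subspace|apply G1_linear|].
    apply (weakly_bounded_of_green G0 G1 green_bound).
    intro k. destruct (Sj' k h0) as [g [Hg [E0 E1]]]. exists g. split; [auto|split; [auto|]].
    exists 0. intros f _. rewrite E1, hip_0r, Cmod_0. lra. }
  split; [|split; [|split]]; auto.
  - intro k. destruct (Sj' k h0) as [f [Hf [E0 _]]]. eauto.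
  - intro k. destruct (Sj' h0 k) as [f [Hf [_ E1]]]. eauto.
Qed.

End UnitaryBoundaryTriple.

Theorem mainTheorem15 (h K : CHilbert) (A : lrel h)
  (HA : closed_symmetric A)
  (Astar : lrel h) (G0 G1 : h * h -> K)
  (HU : unitary_boundary_triple A K Astar G0 G1) :
  ((bounded_on Astar G0 /\ range_full Astar G0) <->
     ordinary_boundary_triple A K Astar G0 G1) /\
  ((bounded_on Astar G1 /\ range_full Astar G1) <->
     ordinary_boundary_triple A K Astar G0 G1).
Proof.
  pose proof (bounded_range_of_ordinary h K A Astar G0 G1 HU) as Ord.
  split; split.
  - intros [B0 R0]. apply (ordinary_of_bounded h K A Astar G0 G1 HU B0).
    exact (bounded_partner h K A Astar G0 G1 HU G0 G1 (G1_linear h K A Astar G0 G1 HU)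
             (green_bound h K A Astar G0 G1 HU) B0 R0).
  - intro O. destruct (Ord O) as (B0 & _ & R0 & _). auto.
  - intros [B1 R1]. apply (ordinary_of_bounded h K A Astar G0 G1 HU); [|exact B1].
    exact (bounded_partner h K A Astar G0 G1 HU G1 G0 (G0_linear h K A Astar G0 G1 HU)
             (green_bound_swap h K A Astar G0 G1 HU) B1 R1).
  - intro O. destruct (Ord O) as (_ & B1 & _ & R1). auto.
Qed.
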